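(* Let $k$ be a difference field of characteristic $0$, $R=k\{y_1,\ldots,y_n\}$, and $I$ a monomial $\sigma$-ideal of $R$ with support set $S=\{\mathbf{u}\in\mathbb{N}[x]^n:\mathbf{y}^{\mathbf{u}}\in I\}$. Then $\langle I\rangle_r=k[\sqrt{\langle S\rangle}]$.
   Context: A difference field is a field $k$ with a ring endomorphism $\sigma$; $R=k\{y_1,\ldots,y_n\}$ is the polynomial ring over $k$ in the variables $\sigma^j(y_i)$, with $\sigma$ extended naturally. For $p=\sum_ic_ix^i\in\mathbb{N}[x]$ and $a\in R$, $a^p=\prod_i(\sigma^i(a))^{c_i}$; $\mathbf{y}^{\mathbf{u}}=y_1^{u_1}\cdots y_n^{u_n}$. A $\sigma$-ideal is an ideal stable under $\sigma$; monomial if generated by monomials; well-mixed if $ab\in I\Rightarrow a\sigma(b)\in I$. $\langle I\rangle_r$ is the smallest radical well-mixed $\sigma$-ideal containing $I$. For $T\subseteq\mathbb{N}[x]^n$: $k[T]=\bigoplus_{\mathbf{u}\in T}k\mathbf{y}^{\mathbf{u}}$; $[T]=\{g\mathbf{u}+\mathbf{t}:\mathbf{u}\in T,\ g\in\mathbb{N}[x]\setminus\{0\},\ \mathbf{t}\in\mathbb{N}[x]^n\}$; $\sqrt{T}=\{\mathbf{u}\in\mathbb{N}[x]^n:m\mathbf{u}\in[T]\text{ for some }m\in\mathbb{N}\setminus\{0\}\}$; $T'=\{\mathbf{u}+x\mathbf{v}:\mathbf{u},\mathbf{v}\in\mathbb{N}[x]^n,\ \mathbf{u}+\mathbf{v}\in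 T\}$; $S^{[0]}=S$, $S^{[j]}=[S^{[j-1]}]'$ for $j\ge1$; $\langle S\rangle=\bigcup_{j\ge0}S^{[j]}$. *)

From HB Require Import structures.
From mathcomp Require Import all_boot all_algebra.
From mathcomp Require Import finmap.
From mathcomp.multinomials Require Import monalg.

Set Implicit Arguments.
Unset Strict Implicit.
Unset Printing Implicit Defensive.

Import GRing.Theory.
Local Open Scope ring_scope.

(* The ring R = k{y_1,...,y_n}: the polynomial ring over k in the
   (infinitely many) variables sigma^j(y_i), i < n, j in N.  The variable
   sigma^j(y_i) is indexed by the pair (i, j). *)
Definition dvar (n : nat) : choiceType := ('I_n * nat)%type.

Notation dpoly k n := {malg k[cmonom (dvar n)]}.

Definition Y (k : fieldType) (n : nat) (i : 'I_n) (j : nat) : dpoly k n :=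
  << ucm ((i, j) : dvar n) >>.

Definition dsigma (k : fieldType) (sigma : {rmorphism k -> k}) (n : nat)
    (p : dpoly k n) : dpoly k n :=
  \sum_(m <- msupp p)
     (sigma (p@_m))%:MP *
     \prod_(v <- finsupp m) Y k v.1 v.2.+1 ^+ (m v).

Definition dpow (k : fieldType) (sigma : {rmorphism k -> k}) (n : nat)
    (a : dpoly k n) (p : {poly nat}) : dpoly k n :=
  \prod_(l < size p) (iter l (@dsigma k sigma n) a) ^+ (nth 0%N (polyseq p) l).

Notation expvec n := 'rV[{poly nat}]_n.

Definition ymon (k : fieldType) (sigma : {rmorphism k -> k}) (n : nat)
    (u : expvec n) : dpoly k n :=
  \prod_(i < n) dpow sigma (Y k i 0) (u 0 i).

(* Ideals of R (as predicates; the whole ring is allowed). *)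
Definition is_ideal (k : fieldType) (n : nat) (I : dpoly k n -> Prop) :=
  [/\ I 0,
      (forall a b, I a -> I b -> I (a + b)) &
      (forall r a, I a -> I (r * a))].

Definition is_sigma_ideal (k : fieldType) (sigma : {rmorphism k -> k})
    (n : nat) (I : dpoly k n -> Prop) :=
  is_ideal I /\ (forall a, I a -> I (dsigma sigma a)).

Definition ideal_gen (k : fieldType) (n : nat) (G : dpoly k n -> Prop) :
    dpoly k n -> Prop :=
  fun f => exists s : seq (dpoly k n * dpoly k n),
    (forall q, q \in s -> G q.2) /\ f = \sum_(q <- s) q.1 * q.2.

Definition is_monomial_ideal (k : fieldType) (sigma : {rmorphism k -> k})
    (n : nat) (I : dpoly k n -> Prop) :=
  exists M : expvec n -> Prop,
    forall f, I f <-> ideal_gen (fun g => exists2 u, M u & g = ymon sigma u) f.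

Definition is_well_mixed (k : fieldType) (sigma : {rmorphism k -> k})
    (n : nat) (I : dpoly k n -> Prop) :=
  forall a b, I (a * b) -> I (a * dsigma sigma b).

Definition is_radical (k : fieldType) (n : nat) (I : dpoly k n -> Prop) :=
  forall a m, (0 < m)%N -> I (a ^+ m) -> I a.

Definition rwm_closure (k : fieldType) (sigma : {rmorphism k -> k})
    (n : nat) (I : dpoly k n -> Prop) : dpoly k n -> Prop :=
  fun f => forall J : dpoly k n -> Prop,
    is_sigma_ideal sigma J -> is_well_mixed sigma J -> is_radical J ->
    (forall a, I a -> J a) -> J f.

Definition kspan (k : fieldType) (sigma : {rmorphism k -> k}) (n : nat)
    (T : expvec n -> Prop) : dpoly k n -> Prop :=
  fun f => exists s : seq (k * expvec n),
    (forall q, q \in s -> T q.2) /\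
    f = \sum_(q <- s) q.1 *: ymon sigma q.2.

Definition exp_ideal (n : nat) (T : expvec n -> Prop) : expvec n -> Prop :=
  fun w => exists u g t, [/\ T u, g != 0 & w = g *: u + t].

Definition exp_sqrt (n : nat) (T : expvec n -> Prop) : expvec n -> Prop :=
  fun u => exists m : nat, (0 < m)%N /\ exp_ideal T (u *+ m).

Definition exp_prime (n : nat) (T : expvec n -> Prop) : expvec n -> Prop :=
  fun w => exists u v, T (u + v) /\ w = u + 'X *: v.

Fixpoint exp_iter (n : nat) (S : expvec n -> Prop) (j : nat) :
    expvec n -> Prop :=
  match j with
  | 0 => S
  | j'.+1 => exp_prime (exp_ideal (exp_iter S j'))
  end.

Definition exp_closure (n : nat) (S : expvec n -> Prop) : expvec n -> Prop :=
  fun u => exists j, exp_iter S j u.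

Definition support_set (k : fieldType) (sigma : {rmorphism k -> k})
    (n : nat) (I : dpoly k n -> Prop) : expvec n -> Prop :=
  fun u => I (ymon sigma u).

(* Let K be the k-span of the monomials y^u, u in sqrt<S>.  Every radical
   well-mixed sigma-ideal J containing I contains y^u for u in S, and the
   operations building sqrt<S> are mirrored in J: y^(g u + t) is a multiple of
   sigma^l(y^u) with l = deg g, y^(u + x v) = y^u sigma(y^v) by well-mixedness,
   and the root step is radicality; hence K is contained in J.
   Conversely K is a sigma-ideal containing I, and membership in K is decided
   monomial by monomial.  Since sqrt<S> is radical and upward closed, if y^w is
   not in K then no monomial whose variables all occur in y^w is in K, so K lies
   in the kernel of the map killing every variable not occurring in y^w.  That
   kernel is prime, which makes K radical and well-mixed. *)

From HB Require Import structures.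
From mathcomp Require Import all_boot all_algebra.
From mathcomp Require Import finmap.
From mathcomp.multinomials Require Import monalg.
From mathcomp.multinomials Require mpoly.
From Stdlib Require Import Classical.

Set Implicit Arguments.
Unset Strict Implicit.
Unset Printing Implicit Defensive.

Import GRing.Theory.
Local Open Scope ring_scope.
Local Notation "1" := (@mone _) : monom_scope.
Local Notation "x * y" := (mmul x y) : monom_scope.

Section ExponentVectors.
Variable n : nat.
Implicit Types (u v w t : expvec n) (S : expvec n -> Prop).

Lemma polyn_mul_neq0 (p q : {poly nat}) : p != 0 -> q != 0 -> p * q != 0.
Proof.
rewrite -!lead_coef_eq0 => lp lq.
have lpq : (lead_coef p * lead_coef q)%N != 0%N by rewrite muln_eq0 negb_or; apply/andP.
move: lp lq; rewrite !lead_coef_eq0 -!size_poly_eq0 (size_proper_mul lpq).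
by case: (size p) => // a; case: (size q) => // b; rewrite addSn addnS.
Qed.

Lemma expvecP u v : (forall (i : 'I_n) l, (u ord0 i)`_l = (v ord0 i)`_l) -> u = v.
Proof. by move=> uv; apply/matrixP => a b; rewrite (ord1 a); apply/polyP. Qed.

Lemma expvec_le_addr u v :
  (forall (i : 'I_n) l, nth 0 (v ord0 i) l <= nth 0 (u ord0 i) l)%N -> exists t, u = v + t.
Proof.
move=> vu; pose t i : {poly nat} :=
  Poly (mkseq (fun l => nth 0 (u ord0 i) l - nth 0 (v ord0 i) l)%N (size (u ord0 i))).
exists (\row_i t i); apply: expvecP => i l; rewrite !mxE coefD coef_Poly.
have [lu | ul] := ltnP l (size (u ord0 i)); first by rewrite nth_mkseq //; exact/esym/subnKC.
have u0 : (u ord0 i)`_l = 0%N by rewrite nth_default.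
move: (vu i l); rewrite u0 leqn0 => /eqP ->.
by rewrite nth_default ?size_mkseq.
Qed.

Lemma expvec_scale_geXn (g : {poly nat}) w : g != 0 ->
  exists l t, g *: w = 'X^l *: w + t.
Proof.
move=> g0; exists (size g).-1; apply: expvec_le_addr => i q; rewrite !mxE.
rewrite coefXnM; case: ltnP => // lq; rewrite coefM.
have ltq : ((size g).-1 < q.+1)%N by rewrite ltnS.
rewrite (bigD1 (Ordinal ltq)) //= -lead_coefE; apply: leq_trans (leq_addr _ _).
by apply: leq_pmull; rewrite lt0n lead_coef_eq0.
Qed.

Definition rad_closure S := exp_sqrt (exp_closure S).

Lemma rad_closure_id S u : S u -> rad_closure S u.
Proof.
move=> Su; exists 1%N; split => //; exists u, 1, 0; split.
- by exists 0%N.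
- exact: oner_neq0.
- by rewrite scale1r addr0.
Qed.

Lemma rad_closure_scale S g u t :
  g != 0 -> rad_closure S u -> rad_closure S (g *: u + t).
Proof.
move=> g0 [m [m0 [w [h [s [[j Sw] h0 um]]]]]].
exists m; split => //; exists w, (g * h), (g *: s + t *+ m); split.
- by exists j.
- exact: polyn_mul_neq0.
- by rewrite mulrnDl scalerMnr um scalerDr scalerA addrA.
Qed.

Lemma rad_closure_addr S u t : rad_closure S u -> rad_closure S (u + t).
Proof. by move/(rad_closure_scale t (oner_neq0 _)); rewrite scale1r. Qed.

Lemma rad_closure_mulrn S u N :
  (0 < N)%N -> rad_closure S (u *+ N) -> rad_closure S u.
Proof.
move=> N0 [m [m0 h]]; exists (N * m)%N; split; first by rewrite muln_gt0 N0.
by rewrite mulrnA.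
Qed.

Lemma rad_closure_mixed S u v :
  rad_closure S (u + v) -> rad_closure S (u + 'X *: v).
Proof.
move=> [m [m0 [w [g [t [[j Sw] g0 uvm]]]]]].
exists m; split => //; exists ((u + 'X *: v) *+ m), 1, 0; split.
- exists j.+1, (u *+ m), (v *+ m); split; last by rewrite mulrnDl scalerMnr.
  by rewrite -mulrnDl uvm; exists w, g, t.
- exact: oner_neq0.
- by rewrite scale1r addr0.
Qed.

End ExponentVectors.

Section CmonomPowers.
Variable I : choiceType.
Implicit Types m : cmonom I.

Definition mexpn m e : cmonom I := iter e (fun x => (m * x)%M) 1%M.

Lemma mexpnE m e i : mexpn m e i = (e * m i)%N.
Proof. by elim: e => [|e IH] /=; rewrite ?cm1 // cmM IH mulSn. Qed.

Lemma cm_bigE (T : Type) (r : seq T) (F : T -> cmonom I) i :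
  (\big[mmul/1%M]_(x <- r) F x) i = (\sum_(x <- r) F x i)%N.
Proof. by apply: (big_morph (fun m : cmonom I => m i)) => [x y|]; rewrite ?cmM ?cm1. Qed.

Lemma sum_seq_indicator (r : seq I) (F : I -> nat) j : uniq r ->
  (\sum_(x <- r) F x * (x == j))%N = (if j \in r then F j else 0)%N.
Proof.
elim: r => [|a r IH] /=; first by rewrite big_nil.
case/andP=> ar ur; rewrite big_cons IH // in_cons.
by case: (eqVneq a j) => [<-|_] /=; rewrite ?(negbTE ar) ?muln1 ?addn0 ?muln0.
Qed.

Lemma cm_sum_indicator m j : (\sum_(x <- finsupp m) m x * (x == j))%N = m j.
Proof. by rewrite sum_seq_indicator ?fset_uniq //; case: finsuppP. Qed.

Lemma cm_le_mdeg m x : (m x <= mdeg m)%N.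
Proof.
have [xm | ] := boolP (x \in finsupp m); last by rewrite -cmE_eq0 => /eqP ->.
by rewrite /mdeg (big_rem x) //= leq_addr.
Qed.

End CmonomPowers.

Section DifferenceMonomials.
Variables (k : fieldType) (sigma : {rmorphism k -> k}) (n : nat).
Local Notation M := (cmonom (dvar n)).
Local Notation P := (dpoly k n).
Implicit Types (m : M) (p : P) (u v : expvec n).

Lemma malgUM m1 m2 : (<< (m1 * m2)%M >> : P) = << m1 >> * << m2 >>.
Proof. by rewrite malgM_def fgmulUU mulr1. Qed.

Lemma big_malgU (T : Type) (r : seq T) (F : T -> M) :
  (<< \big[mmul/1%M]_(x <- r) F x >> : P) = \prod_(x <- r) << F x >>.
Proof. by apply: (big_morph (fun m : M => (<< m >> : P))) => [x y|]; rewrite ?malgUM. Qed.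

Lemma malgU_mexpn m e : (<< mexpn m e >> : P) = << m >> ^+ e.
Proof. by elim: e => [|e IH] /=; rewrite ?expr0 // exprS -IH malgUM. Qed.

Lemma malgUZ (c : k) m : (<< c *g m >> : P) = c *: << m >>.
Proof. by rewrite -mul_malgC malgM_def fgmulUU mulr1 mul1m. Qed.

Definition mshift m : M :=
  \big[mmul/1%M]_(v <- finsupp m) mexpn (ucm ((v.1, v.2.+1) : dvar n)) (m v).

Lemma mshiftE m (i : 'I_n) l :
  mshift m (i, l) = if l is l'.+1 then m (i, l') else 0%N.
Proof.
rewrite /mshift cm_bigE; under eq_bigr do rewrite mexpnE cmU.
case: l => [|l]; first by rewrite big1 // => v _; rewrite xpair_eqE andbF muln0.
rewrite -(cm_sum_indicator m (i, l)); apply: eq_bigr => -[a b] _ /=.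
by rewrite !xpair_eqE eqSS.
Qed.

Lemma mshiftU (i : 'I_n) l : mshift (ucm ((i, l) : dvar n)) = ucm ((i, l.+1) : dvar n).
Proof.
by apply/eqP/cmP => -[a [|b]]; rewrite mshiftE !cmU !xpair_eqE ?andbF ?eqSS.
Qed.

Lemma dsigmaE p :
  dsigma sigma p = \sum_(m <- msupp p) << sigma p@_m *g mshift m >>.
Proof.
apply: eq_bigr => m _; rewrite [RHS]malgUZ mul_malgC; congr (_ *: _).
by rewrite big_malgU; apply: eq_bigr => v _; rewrite malgU_mexpn.
Qed.

Lemma dsigmaU (c : k) m : dsigma sigma << c *g m >> = << sigma c *g mshift m >>.
Proof.
rewrite dsigmaE msuppU; case: eqP => [->|_]; first by rewrite big_nil rmorph0 monalgU0.
by rewrite big_seq_fset1 mcoeffUU.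
Qed.

Lemma iter_dsigmaY (i : 'I_n) l : iter l (@dsigma k sigma n) (Y k i 0) = Y k i l.
Proof.
(* Close by conversion: [done] would try to compute the big operators. *)
elim: l => [|l IH]; first reflexivity.
rewrite iterS IH /Y dsigmaU rmorph1 mshiftU; reflexivity.
Qed.

Definition cmonom_of u : M :=
  \big[mmul/1%M]_(i < n) \big[mmul/1%M]_(l < size (u ord0 i))
     mexpn (ucm ((i, val l) : dvar n)) (nth 0%N (u ord0 i) l).

Lemma ymonE u : ymon sigma u = << cmonom_of u >>.
Proof.
rewrite /ymon /cmonom_of big_malgU; apply: eq_bigr => i _.
rewrite /dpow big_malgU; apply: eq_bigr => l _.
by rewrite iter_dsigmaY malgU_mexpn.
Qed.

Lemma cmonom_ofE u (i : 'I_n) l : cmonom_of u (i, l) = nth 0%N (u ord0 i) l.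
Proof.
rewrite /cmonom_of cm_bigE (bigD1 i) //= [X in (_ + X)%N]big1 ?addn0; last first.
  move=> j ji; rewrite cm_bigE big1 // => l' _.
  by rewrite mexpnE cmU xpair_eqE (negbTE ji) muln0.
rewrite cm_bigE; under eq_bigr do rewrite mexpnE cmU xpair_eqE eqxx /=.
rewrite -(big_mkord xpredT (fun j => nth 0%N (u ord0 i) j * (j == l))%N).
rewrite sum_seq_indicator ?iota_uniq // mem_iota add0n subn0.
by case: ltnP => // ul; rewrite nth_default.
Qed.

(* Entries with index beyond the largest shift occurring in m are zero. *)
Definition expvec_of m : expvec n :=
  \row_(i < n) Poly (mkseq (fun l => m ((i, l) : dvar n))
                           (\max_(v <- finsupp m) v.2.+1)%N).

Lemma expvec_ofE m (i : 'I_n) l : nth 0%N (expvec_of m ord0 i) l = m (i, l).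
Proof.
rewrite mxE coef_Poly; set B := (\max_(v <- finsupp m) v.2.+1)%N.
have [lB | ge] := ltnP l B; first by rewrite nth_mkseq.
rewrite nth_default ?size_mkseq //; apply/esym/eqP; rewrite cmE_eq0.
apply: contraTN ge => supp; rewrite -ltnNge.
exact: (@leq_bigmax_seq _ _ xpredT (fun v : dvar n => v.2.+1) _ supp isT).
Qed.

Lemma expvec_of_inj : injective expvec_of.
Proof. by move=> m1 m2 e; apply/eqP/cmP => -[i l]; rewrite -!expvec_ofE e. Qed.

Lemma cmonom_ofK : cancel cmonom_of expvec_of.
Proof. by move=> u; apply: expvecP => i l; rewrite expvec_ofE cmonom_ofE. Qed.

Lemma expvec_ofK : cancel expvec_of cmonom_of.
Proof. by move=> m; apply: expvec_of_inj; rewrite cmonom_ofK. Qed.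

Lemma expvec_ofM m1 m2 : expvec_of (m1 * m2)%M = expvec_of m1 + expvec_of m2.
Proof. by apply: expvecP => i l; rewrite expvec_ofE cmM mxE coefD !expvec_ofE. Qed.

Lemma expvec_of_mshift m : expvec_of (mshift m) = 'X *: expvec_of m.
Proof.
apply: expvecP => i l; rewrite expvec_ofE mshiftE mxE coefXM.
by case: l => [|l] //=; rewrite expvec_ofE.
Qed.

Lemma ymon_expvec_of m : ymon sigma (expvec_of m) = << m >>.
Proof. by rewrite ymonE expvec_ofK. Qed.

Lemma ymon0 : ymon sigma (0 : expvec n) = 1.
Proof.
rewrite ymonE; suff -> : cmonom_of (0 : expvec n) = 1%M by [].
apply: expvec_of_inj; rewrite cmonom_ofK.
by apply: expvecP => i l; rewrite expvec_ofE cm1 mxE coef0.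
Qed.

Lemma ymonD u v : ymon sigma (u + v) = ymon sigma u * ymon sigma v.
Proof.
by rewrite -[u]cmonom_ofK -[v]cmonom_ofK -expvec_ofM !ymon_expvec_of malgUM.
Qed.

Lemma ymonMn u e : ymon sigma (u *+ e) = ymon sigma u ^+ e.
Proof. by elim: e => [|e IH]; rewrite ?ymon0 // mulrS exprS ymonD IH. Qed.

Lemma ymonX u : ymon sigma ('X *: u) = dsigma sigma (ymon sigma u).
Proof. by rewrite -[u]cmonom_ofK -expvec_of_mshift !ymon_expvec_of dsigmaU rmorph1. Qed.

Lemma ymonXn l u : ymon sigma ('X^l *: u) = iter l (@dsigma k sigma n) (ymon sigma u).
Proof. by elim: l => [|l IH]; rewrite ?scale1r // iterS -IH -ymonX scalerA exprS. Qed.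

End DifferenceMonomials.

(* mpoly is imported only locally: its notations clash with those of monalg. *)
Module Restriction.
Import mpoly.

Section Restriction.
Variables (k : fieldType) (n : nat) (V : {fset dvar n}).
Local Notation M := (cmonom (dvar n)).
Local Notation r := (size (V : seq (dvar n))).
Local Notation P := (mpoly r k).
Local Notation inV m := (finsupp m `<=` V)%fset.

Definition restr_mnm (m : M) : 'X_{1..r} :=
  [multinom m (tnth (in_tuple (V : seq (dvar n))) j) | j < r].

Definition restr_mon (m : M) : P := if inV m then 'X_[restr_mnm m] else 0.

Lemma restr_mon_is_multiplicative : mmorphism restr_mon.
Proof.
split=> [m1 m2|]; last first.
  rewrite /restr_mon mdom1 fsub0set -mpolyX0; congr 'X_[_].
  by apply/mnmP => j; rewrite mnm0E mnmE cm1.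
rewrite /restr_mon mdomD fsubUset.
case: (inV m1); case: (inV m2); rewrite ?mul0r ?mulr0 // -mpolyXD.
by congr 'X_[_]; apply/mnmP => j; rewrite mnmDE !mnmE cmM.
Qed.

HB.instance Definition _ :=
  isMultiplicative.Build M P restr_mon restr_mon_is_multiplicative.

(* Sets the variables outside V to 0; the target is a domain, so the kernel is prime. *)
Definition restr (g : dpoly k n) : P := monalg.mmap (@mpolyC r k) restr_mon g.

Lemma restrM (a b : dpoly k n) : restr (a * b) = restr a * restr b.
Proof. exact: rmorphM. Qed.

Lemma restr_mnm_inj (m1 m2 : M) :
  inV m1 -> inV m2 -> restr_mnm m1 = restr_mnm m2 -> m1 = m2.
Proof.
move=> V1 V2 e; apply/eqP/cmP => x.
case: (boolP (x \in (V : seq (dvar n)))) => [xV | xV].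
  have /tnthP [j ->] : x \in in_tuple (V : seq (dvar n)) by [].
  by have := congr1 (fun mm : 'X_{1..r} => mm j) e; rewrite !mnmE.
have out (m : M) : inV m -> m x = 0%N.
  by move=> Vm; apply/eqP; rewrite cmE_eq0; apply: contra xV => /(fsubsetP Vm).
by rewrite !out.
Qed.

Lemma mcoeff_restr (g : dpoly k n) (m : M) :
  inV m -> mcoeff (restr_mnm m) (restr g) = monalg.mcoeff m g.
Proof.
move=> Vm; rewrite /restr monalg.mmapE raddf_sum [in RHS](monalgE g) raddf_sum /=.
apply: eq_bigr => m' _; rewrite mcoeffU mcoeffCM /restr_mon.
case: (boolP (inV m')) => [Vm' | nVm'].
  rewrite mcoeffX mulr_natr; congr (_ *+ _).
  case: (eqVneq m' m) => [-> | ne]; first by rewrite eqxx.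
  by case: eqP => // /(restr_mnm_inj Vm' Vm) /eqP; rewrite (negbTE ne).
rewrite mcoeff0 mulr0; case: (eqVneq m' m) => [e | _]; last by rewrite mulr0n.
by move: nVm'; rewrite e Vm.
Qed.

Definition restr_kernel (g : dpoly k n) : Prop := restr g = 0.

Lemma restr_kernel_out (g : dpoly k n) :
  (forall m, m \in monalg.msupp g -> ~~ inV m) -> restr_kernel g.
Proof.
move=> out; rewrite /restr_kernel /restr monalg.mmapE big_seq big1 // => m gm.
by rewrite /restr_mon (negbTE (out m gm)) mulr0.
Qed.

Lemma restr_kernel_in (g : dpoly k n) (m : M) :
  m \in monalg.msupp g -> inV m -> ~ restr_kernel g.
Proof.
move=> gm Vm g0; move: gm; rewrite -mcoeff_neq0 -(mcoeff_restr g Vm).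
by rewrite [restr g]g0 mcoeff0 eqxx.
Qed.

Lemma restr_kernel_prime (a b : dpoly k n) :
  restr_kernel (a * b) -> restr_kernel a \/ restr_kernel b.
Proof.
by rewrite /restr_kernel restrM => /eqP; rewrite mulf_eq0 => /orP [] /eqP; [left | right].
Qed.

Lemma restr_kernel_root (a : dpoly k n) e : restr_kernel (a ^+ e) -> restr_kernel a.
Proof.
by rewrite /restr_kernel /restr rmorphXn => /eqP; rewrite expf_eq0 => /andP [_ /eqP].
Qed.

End Restriction.
End Restriction.

Section MonomialSpans.
Variables (k : fieldType) (sigma : {rmorphism k -> k}) (n : nat).
Local Notation M := (cmonom (dvar n)).
Local Notation P := (dpoly k n).
Implicit Types (m : M) (a b f : P) (u : expvec n).

Lemma msupp_sumU (X : eqType) (r : seq X) (c : X -> k) (g : X -> M) m0 :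
  m0 \in msupp (\sum_(x <- r) << c x *g g x >> : P) -> exists2 x, x \in r & m0 = g x.
Proof.
elim: r => [|x r IH]; first by rewrite big_nil msupp0.
rewrite big_cons => /(fsubsetP (msuppD_le _ _)); rewrite in_fsetU => /orP [].
  by move/(fsubsetP msuppU_le); rewrite in_fset1 => /eqP ->; exists x; rewrite ?mem_head.
by case/IH => y yr ->; exists y; rewrite // in_cons yr orbT.
Qed.

Lemma msupp_dsigma b m : m \in msupp (dsigma sigma b) ->
  exists2 mb, mb \in msupp b & m = mshift mb.
Proof. by rewrite dsigmaE => /msupp_sumU. Qed.

Lemma kspanP (T : expvec n -> Prop) f :
  kspan sigma T f <-> (forall m, m \in msupp f -> T (expvec_of m)).
Proof.
split=> [[s [sT ->]] m | fT].
  rewrite (eq_bigr (fun q => << q.1 *g cmonom_of q.2 >>)) => [|q _].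
    by case/msupp_sumU => q qs ->; rewrite cmonom_ofK; apply: sT.
  by rewrite ymonE -malgUZ.
exists [seq (f@_m, expvec_of m) | m <- msupp f]; split.
  by move=> q /mapP [m fm ->]; apply: fT.
rewrite big_map {1}(monalgE f); apply: eq_bigr => m _ /=.
by rewrite ymon_expvec_of -malgUZ.
Qed.

Variable S : expvec n -> Prop.
Local Notation K := (kspan sigma (rad_closure S)).

(* A large multiple of the exponent of w dominates that of any m supported in w. *)
Lemma rad_closure_finsupp m (w : M) : rad_closure S (expvec_of m) ->
  (finsupp m `<=` finsupp w)%fset -> rad_closure S (expvec_of w).
Proof.
move=> Sm mw; apply: (@rad_closure_mulrn _ S _ (mdeg m).+1) => //.
have [t ->] : exists t, expvec_of w *+ (mdeg m).+1 = expvec_of m + t.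
  apply: expvec_le_addr => i l; rewrite mulmxnE coefMn !expvec_ofE.
  have [iml | ] := boolP ((i, l) \in finsupp m); last by rewrite -cmE_eq0 => /eqP ->.
  have w0 : (0 < w (i, l))%N by rewrite lt0n cmE_neq0; apply: (fsubsetP mw).
  rewrite -mulr_natr natn; apply: leq_trans (cm_le_mdeg m (i, l)) _.
  exact/ltnW/leq_pmull.
exact: rad_closure_addr.
Qed.

Lemma kspan_restr_kernel (w : M) g : ~ rad_closure S (expvec_of w) -> K g ->
  Restriction.restr_kernel (finsupp w) g.
Proof.
move=> nSw /kspanP Kg; apply: Restriction.restr_kernel_out => m gm.
by apply/negP => mw; apply/nSw/(rad_closure_finsupp (Kg m gm) mw).
Qed.

Lemma kspan_sigma_ideal : is_sigma_ideal sigma K.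
Proof.
split; first split.
- by apply/kspanP => m; rewrite msupp0.
- move=> a b /kspanP Ka /kspanP Kb; apply/kspanP => m.
  by move/(fsubsetP (msuppD_le _ _)); rewrite in_fsetU => /orP [/Ka | /Kb].
- move=> c a /kspanP Ka; apply/kspanP => m /msuppM_le [m1 [m2 [_ am2 ->]]].
  by rewrite expvec_ofM addrC; apply/rad_closure_addr/Ka.
move=> a /kspanP Ka; apply/kspanP => m /msupp_dsigma [mb amb ->].
rewrite expvec_of_mshift -[_ *: _]addr0.
by apply: rad_closure_scale (Ka _ amb); rewrite polyX_eq0.
Qed.

Lemma kspan_radical : is_radical K.
Proof.
move=> a e _ Kae; apply/kspanP => m am; apply: NNPP => nSm.
have /Restriction.restr_kernel_root := kspan_restr_kernel nSm Kae.
exact: Restriction.restr_kernel_in am (fsubset_refl _).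
Qed.

Lemma kspan_well_mixed : is_well_mixed sigma K.
Proof.
move=> a b Kab; apply/kspanP => m /msuppM_le [m1 [m2 [am1 bm2 ->]]].
have [mb bmb ->] := msupp_dsigma bm2.
rewrite expvec_ofM expvec_of_mshift; apply: rad_closure_mixed.
rewrite -expvec_ofM; apply: NNPP => nS.
have [] := Restriction.restr_kernel_prime (kspan_restr_kernel nS Kab).
- by apply: (Restriction.restr_kernel_in am1); rewrite mdomD fsubsetUl.
- by apply: (Restriction.restr_kernel_in bmb); rewrite mdomD fsubsetUr.
Qed.

Lemma kspan_ymon u : rad_closure S u -> K (ymon sigma u).
Proof.
move=> Su; apply/kspanP => m.
by rewrite ymonE msuppU1 in_fset1 => /eqP ->; rewrite cmonom_ofK.
Qed.

End MonomialSpans.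

Section IdealMembership.
Variables (k : fieldType) (sigma : {rmorphism k -> k}) (n : nat).
Local Notation P := (dpoly k n).
Variable J : P -> Prop.

Lemma ideal_sum (X : eqType) (r : seq X) (F : X -> P) :
  is_ideal J -> (forall x, x \in r -> J (F x)) -> J (\sum_(x <- r) F x).
Proof.
case=> J0 JD _; elim: r => [|x r IH] Jr; first by rewrite big_nil.
rewrite big_cons; apply: JD; first by apply: Jr; rewrite mem_head.
by apply: IH => y yr; apply: Jr; rewrite in_cons yr orbT.
Qed.

Lemma monomial_ideal_sub (I : P -> Prop) : is_ideal J -> is_monomial_ideal sigma I ->
  (forall u, I (ymon sigma u) -> J (ymon sigma u)) -> forall f, I f -> J f.
Proof.
move=> Jid [G IG] IJ f /IG [s [sG ->]]; apply: ideal_sum => // q /sG [u Gu ->].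
case: Jid => _ _ JM; apply/JM/IJ/IG; exists [:: (1, ymon sigma u)]; split.
  by move=> q'; rewrite in_cons orbF => /eqP -> /=; exists u.
by rewrite big_seq1 mul1r.
Qed.

Hypotheses (Jsigma : is_sigma_ideal sigma J) (Jmixed : is_well_mixed sigma J)
  (Jradical : is_radical J).

Lemma ideal_ymon_exp_ideal (T : expvec n -> Prop) :
  (forall w, T w -> J (ymon sigma w)) -> forall v, exp_ideal T v -> J (ymon sigma v).
Proof.
move=> JT v [w [g [t [Tw g0 ->]]]].
have [l [t' ->]] := expvec_scale_geXn w g0.
have [[_ _ JM] Jiter] := Jsigma.
rewrite !ymonD ymonXn mulrC; apply: (JM); rewrite mulrC; apply: JM.
by elim: l => [|l IH] /=; [apply: JT | apply: Jiter].
Qed.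

Lemma ideal_ymon_exp_iter (S : expvec n -> Prop) :
  (forall u, S u -> J (ymon sigma u)) -> forall j u, exp_iter S j u -> J (ymon sigma u).
Proof.
move=> JS; elim => [|j IH] u /=; first exact: JS.
move=> [a [b [Sab ->]]].
have := ideal_ymon_exp_ideal IH Sab; rewrite ymonD => /Jmixed.
by rewrite -ymonX -ymonD.
Qed.

Lemma kspan_rad_closure_sub (S : expvec n -> Prop) :
  (forall u, S u -> J (ymon sigma u)) -> forall f, kspan sigma (rad_closure S) f -> J f.
Proof.
have [[_ _ JM] _] := Jsigma.
move=> JS f [s [sS ->]]; apply: ideal_sum => [|q /sS [m [m0 Sm]]]; first exact: Jsigma.1.
rewrite -mul_malgC; apply/JM/(Jradical m0); rewrite -ymonMn.
by apply: ideal_ymon_exp_ideal Sm => w [j]; apply: ideal_ymon_exp_iter.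
Qed.

End IdealMembership.

Theorem corollary5p11 (k : fieldType) (sigma : {rmorphism k -> k}) (n : nat)
    (I : dpoly k n -> Prop) :
  [pchar k]%R =i pred0 ->
  is_sigma_ideal sigma I ->
  is_monomial_ideal sigma I ->
  forall f : dpoly k n,
    rwm_closure sigma I f <->
    kspan sigma (exp_sqrt (exp_closure (support_set sigma I))) f.
Proof.
move=> _ _ Imon f; split => [If | Kf J Jsigma Jmixed Jradical IJ].
  have Ksigma := kspan_sigma_ideal sigma (support_set sigma I).
  apply: If; [exact: Ksigma | exact: kspan_well_mixed | exact: kspan_radical |].
  apply: monomial_ideal_sub Ksigma.1 Imon _ => u Iu.
  exact/kspan_ymon/rad_closure_id.
by apply: (kspan_rad_closure_sub Jsigma Jmixed Jradical) Kf => u; apply: IJ.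
Qed.
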